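(* Let $S\subseteq\mathbb{R}^m$ be a semialgebraic set. Then there exist $\mathcal N\in ISDnet(m,n,1)$ and $C\in\mathbb{N}$ such that for every $c\ge C$ and every $x\in\mathbb{R}^m$, $\mathrm{ODESolve}(\mathcal N,c,x,(0,0,0),1) = (0,\chi_S(x))$, where $0\in\mathbb{R}^n$ and $\chi_S$ is the characteristic function of $S$ ($\chi_S(x)=1$ if $x\in S$, $0$ otherwise).
   Context: $ISD(D)$ is the smallest set of functions $D\to\mathbb{R}$ containing all restrictions of real polynomials and closed under pointwise $\min$, $\max$; vector/matrix maps are ISD if all entries are. $ISDnet(m,n,1) := ISD(\mathbb{R}^m\times\mathbb{R}^{n+1}\times\mathbb{R},\ \mathbb{R}^{(n+1)\times(n+1)}\times\mathbb{R}^{n+1})$; for $\mathcal N$ in it write $\mathcal N(x,y,t,s)=(M(x,y,t,s),b(x,y,t,s))$. $\mathrm{clamp\text{-}sol}_c(M,b):=\mathrm{clamp}(M^{-1}b,-c,c)$ (componentwise $a_i\mapsto\min(\max(a_i,-c),c)$) if $M$ is invertible, and $0$ otherwise. $\mathrm{ODESolve}(\mathcal N,c,x,(y_0,t_0,s_0),s_{\mathrm{final}})$ denotes $(y(s_{\mathrm{final}}),t(s_{\mathrm{final}}))$ where $(y,t)$ is the exact solution of $\frac{d}{ds}(y,t)=\mathrm{clamp\text{-}sol}_c\big(M(x,y,t,s),b(x,y,t,s)\big)$ with $(y,t)(s_0)=(y_0,t_0)$. A semialgebraic set is a finite union of sets defined by finitely many polynomial equations and strict polynomial inequalities. *)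

From HB Require Import structures.
From mathcomp Require Import all_boot all_order all_algebra.
From mathcomp Require Import all_classical all_reals all_analysis.
From Stdlib Require Import List.
Set Implicit Arguments. Unset Strict Implicit. Unset Printing Implicit Defensive.
Import Order.TTheory GRing.Theory Num.Theory.
Import numFieldNormedType.Exports.
Local Open Scope classical_set_scope.
Local Open Scope ring_scope.

Section Defs.
Variable R : realType.

Inductive polyfun {D : Type} (Coord : (D -> R) -> Prop) : (D -> R) -> Prop :=
  | pf_const (a : R) : polyfun Coord (fun _ => a)
  | pf_coord (f : D -> R) : Coord f -> polyfun Coord f
  | pf_add (f g : D -> R) : polyfun Coord f -> polyfun Coord g ->
      polyfun Coord (fun z => f z + g z)
  | pf_mul (f g : D -> R) : polyfun Coord f -> polyfun Coord g ->
      polyfun Coord (fun z => f z * g z).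

Inductive isd {D : Type} (Coord : (D -> R) -> Prop) : (D -> R) -> Prop :=
  | isd_poly (f : D -> R) : polyfun Coord f -> isd Coord f
  | isd_min (f g : D -> R) : isd Coord f -> isd Coord g ->
      isd Coord (fun z => Num.min (f z) (g z))
  | isd_max (f g : D -> R) : isd Coord f -> isd Coord g ->
      isd Coord (fun z => Num.max (f z) (g z)).

Definition coordRm (m : nat) : (('I_m -> R) -> R) -> Prop :=
  fun f => exists i : 'I_m, f = fun x => x i.

(* Semialgebraic subset of R^m: finite union of sets, each defined by finitely
   many polynomial equations P = 0 and strict inequalities Q > 0. *)
Definition semialgebraic (m : nat) (S : set ('I_m -> R)) : Prop :=
  exists blocks : list (list (('I_m -> R) -> R) * list (('I_m -> R) -> R)),
    Forall (fun B => Forall (polyfun (@coordRm m)) B.1 /\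
                     Forall (polyfun (@coordRm m)) B.2) blocks /\
    forall x, S x <-> Exists (fun B => Forall (fun P => P x = 0) B.1 /\
                                      Forall (fun Q => 0 < Q x) B.2) blocks.

(* Domain R^m x R^(n+1) x R of an ISDnet(m,n,1); the middle block is the
   state (y,t) with y = first n coordinates, t = last coordinate. *)
Definition netdom (m n : nat) := (('I_m -> R) * ('I_n.+1 -> R) * R)%type.

Definition coordNet (m n : nat) : (netdom m n -> R) -> Prop :=
  fun f => (exists i : 'I_m, f = fun p => p.1.1 i)
        \/ (exists j : 'I_n.+1, f = fun p => p.1.2 j)
        \/ f = fun p => p.2.

Definition isd_net (m n : nat)
    (M : ('I_m -> R) -> ('I_n.+1 -> R) -> R -> 'M[R]_n.+1)
    (b : ('I_m -> R) -> ('I_n.+1 -> R) -> R -> 'cV[R]_n.+1) : Prop :=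
  (forall i j : 'I_n.+1,
      isd (@coordNet m n) (fun p => M p.1.1 p.1.2 p.2 i j)) /\
  (forall i : 'I_n.+1,
      isd (@coordNet m n) (fun p => b p.1.1 p.1.2 p.2 i ord0)).

Definition clamp (c a : R) : R := Num.min (Num.max a (- c)) c.

Definition clamp_sol (k : nat) (c : R) (M : 'M[R]_k) (b : 'cV[R]_k) : 'cV[R]_k :=
  if M \in unitmx then map_mx (clamp c) (invmx M *m b) else 0.

Definition ode_sol (m n : nat)
    (M : ('I_m -> R) -> ('I_n.+1 -> R) -> R -> 'M[R]_n.+1)
    (b : ('I_m -> R) -> ('I_n.+1 -> R) -> R -> 'cV[R]_n.+1)
    (c : R) (x : 'I_m -> R) (z : R -> 'I_n.+1 -> R) : Prop :=
  (forall j, z 0 j = 0) /\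
  (forall j, {within `[0, 1], continuous (fun s => z s j)}) /\
  (forall s : R, 0 < s < 1 -> forall j,
      is_derive s 1 (fun u => z u j)
        (clamp_sol c (M x (z s) s) (b x (z s) s) j ord0)).

End Defs.

From HB Require Import structures.
From mathcomp Require Import all_boot all_order all_algebra.
From mathcomp Require Import all_classical all_reals all_analysis.
From mathcomp Require Import ring lra.
Import Order.TTheory GRing.Theory Num.Theory.
Import numFieldNormedType.Exports.
Local Open Scope classical_set_scope.
Local Open Scope ring_scope.
Set Implicit Arguments. Unset Strict Implicit.

(* Inclusion-exclusion writes the indicator of a semialgebraic set as a signed
   sum  sum_k (-1)^(s_k) [g_k(x) > 0]  of positivity indicators of ISD functions
   g_k.  The network has one state coordinate t besides y.  The time interval
   [0,1] is cut into K windows; during window k the drive +-K dsmoothstep(Ks - k)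
   moves t by +-1 along a C^1 smoothstep, and M = diag(switch, 1) where switch
   vanishes during window k exactly when g_k(x) <= 0: then M is singular,
   clamp-sol returns 0 and the window is skipped.  The drive is bounded by 2K^2,
   so for c >= 2K^2 the clamp is inactive.  The field does not depend on the
   state, so by the mean value theorem every solution ends at
   t(1) = sum_k (-1)^(s_k) [g_k(x) > 0] = 1_S(x). *)

Section RealDerive.
Variable R : realType.

Lemma is_derive_glue (f g : R -> R) (a d : R) :
  is_derive a 1 f d -> is_derive a 1 g d -> f a = g a ->
  is_derive a 1 (fun u => if u <= a then f u else g u) d.
Proof.
move=> [df Df] [dg Dg] fga.
move: df => /cvg_ex [lf Hf]; move: dg => /cvg_ex [lg Hg].
have lfd : lf = d by rewrite -Df /derive (cvg_lim _ Hf).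
have lgd : lg = d by rewrite -Dg /derive (cvg_lim _ Hg).
subst lf lg.
have key : (fun k : R => k^-1 *: (((fun u => if u <= a then f u else g u) \o shift a)
     (k *: 1) - (if a <= a then f a else g a))) x @[x --> 0^'] --> d.
  apply/cvgrPdist_lt => e e0.
  move/cvgrPdist_lt : Hf => /(_ e e0) Hf'; move/cvgrPdist_lt : Hg => /(_ e e0) Hg'.
  near=> k.
  have kn0 : k != 0 by near: k; exact: nbhs_dnbhs_neq.
  rewrite /= lexx; case: (ltP k 0) => k0.
    have -> : (k *: 1 + a <= a) = true by rewrite scaler1 gerDr ltW.
    by near: k.
  have kpos : 0 < k by rewrite lt_neqAle eq_sym kn0 k0.
  have -> : (k *: 1 + a <= a) = false by rewrite scaler1 leNgt ltrDr kpos.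
  by rewrite fga; near: k.
by split; [exact: cvgP key | exact: cvg_lim key].
Unshelve. all: by end_near.
Qed.

Lemma is_derive_ifle (f g : R -> R) (a u d : R) :
  (u <= a -> is_derive u 1 f d) -> (a <= u -> is_derive u 1 g d) ->
  (u = a -> f a = g a) ->
  is_derive u 1 (fun v => if v <= a then f v else g v) d.
Proof.
move=> hf hg fga; case: (ltgtP u a) => ua.
- apply: near_eq_is_derive (hf (ltW ua)); near=> v.
  suff /ltW -> : v < a by [].
  by near: v; exact: lt_nbhsl.
- apply: near_eq_is_derive (hg (ltW ua)); near=> v.
  suff va : a < v by rewrite leNgt va.
  by near: v; exact: lt_nbhsr.
- by subst u; apply: is_derive_glue; [exact: hf | exact: hg | exact: fga].
Unshelve. all: by end_near.
Qed.

Lemma is_derive_eq_itv (f g df : R -> R) (a b : R) : a < b ->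
  {within `[a, b], continuous f} -> {within `[a, b], continuous g} ->
  {in `]a, b[, forall s : R, is_derive s 1 f (df s)} ->
  {in `]a, b[, forall s : R, is_derive s 1 g (df s)} ->
  f a = g a -> f b = g b.
Proof.
move=> ab fc gc fd gd fga.
have hd : {in `]a, b[, forall s : R, is_derive s 1 (f - g) ((fun=> 0) s)}.
  move=> s s_ab; apply: is_derive_eq (is_deriveB (fd s s_ab) (gd s s_ab)) _.
  exact: subrr.
have [t _] := MVT ab hd (within_continuousB fc gc).
by rewrite mul0r !fctE fga subrr subr0 => /eqP; rewrite subr_eq0 => /eqP.
Qed.

End RealDerive.

Section Smoothstep.
Variable R : realType.

Definition smoothstep (u : R) : R :=
  if u <= 0 then 0 else if u <= 1 then 3 * u ^+ 2 - 2 * u ^+ 3 else 1.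

Definition dsmoothstep (u : R) : R := Num.max 0 (6 * u * (1 - u)).

Lemma smoothstep_derive (u : R) : is_derive u 1 smoothstep (dsmoothstep u).
Proof.
have cubic_derive (v : R) : is_derive v 1 (fun w : R => 3 * w ^+ 2 - 2 * w ^+ 3) (6 * v * (1 - v)).
  by apply: is_derive_eq; rewrite /GRing.scale /=; ring.
apply: is_derive_ifle => [u0|u0|_]; last by rewrite ler01; ring.
  by apply: is_derive_eq (is_derive_cst 0 u 1) _; apply/esym/max_idPl; nra.
apply: is_derive_ifle => [u1|u1|_]; last by ring.
  by apply: is_derive_eq (cubic_derive u) _; apply/esym/max_idPr; nra.
by apply: is_derive_eq (is_derive_cst (1 : R) u 1) _; apply/esym/max_idPl; nra.
Qed.

Lemma smoothstep_le0 u : u <= 0 -> smoothstep u = 0.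
Proof. by rewrite /smoothstep => ->. Qed.

Lemma smoothstep_ge1 u : 1 <= u -> smoothstep u = 1.
Proof.
move=> u1; rewrite /smoothstep leNgt (lt_le_trans ltr01 u1) /=.
case: (leP u 1) => // u1'.
have -> : u = 1 by apply/eqP; rewrite eq_le u1 u1'.
by ring.
Qed.

Lemma dsmoothstep_ge0 u : 0 <= dsmoothstep u.
Proof. by rewrite le_max lexx. Qed.

Lemma dsmoothstep_le2 u : dsmoothstep u <= 2.
Proof. by rewrite ge_max ler0n /=; have := sqr_ge0 (2 * u - 1); nra. Qed.

Lemma dsmoothstep_neq0 u : dsmoothstep u != 0 -> 0 < u < 1.
Proof.
have [pos _|npos] := boolP (0 < 6 * u * (1 - u)); first by apply/andP; split; nra.
by rewrite /dsmoothstep (max_idPl _) ?eqxx // leNgt.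
Qed.

End Smoothstep.

Section IsdClosure.
Variables (R : realType) (D : Type) (Coord : (D -> R) -> Prop).

Lemma eq_isd (f g : D -> R) : f =1 g -> isd Coord f -> isd Coord g.
Proof. by move=> /funext ->. Qed.

Lemma isd_cst (a : R) : isd Coord (fun=> a).
Proof. exact/isd_poly/pf_const. Qed.

Lemma polyfunN (f : D -> R) : polyfun Coord f -> polyfun Coord (fun z => - f z).
Proof.
move=> pf; have -> : (fun z => - f z) = (fun z => -1 * f z) by apply/funext => z; rewrite mulN1r.
exact: pf_mul (pf_const _ _) pf.
Qed.

Lemma isd_norm (f : D -> R) : polyfun Coord f -> isd Coord (fun z => `|f z|).
Proof.
move=> pf; apply: eq_isd (isd_max (isd_poly pf) (isd_poly (polyfunN pf))) => z.
exact: maxrN.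
Qed.

Lemma isdD_poly (f g : D -> R) : isd Coord f -> polyfun Coord g ->
  isd Coord (fun z => f z + g z).
Proof.
move=> + pg; elim => {}f.
- by move=> pf; exact/isd_poly/pf_add.
- by move=> f' _ h _ h'; apply: eq_isd (isd_min h h') => z; rewrite addr_minl.
- by move=> f' _ h _ h'; apply: eq_isd (isd_max h h') => z; rewrite addr_maxl.
Qed.

Lemma isdD (f g : D -> R) : isd Coord f -> isd Coord g -> isd Coord (fun z => f z + g z).
Proof.
move=> + ig; elim => {}f.
- by move=> pf; apply: eq_isd (isdD_poly ig pf) => z; rewrite addrC.
- by move=> f' _ h _ h'; apply: eq_isd (isd_min h h') => z; rewrite addr_minl.
- by move=> f' _ h _ h'; apply: eq_isd (isd_max h h') => z; rewrite addr_maxl.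
Qed.

Lemma isdZ (c : R) (f : D -> R) : isd Coord f -> isd Coord (fun z => c * f z).
Proof.
elim => {}f.
- by move=> pf; exact/isd_poly/(pf_mul (pf_const _ _) pf).
- move=> f' _ h _ h'; have [c0|c0] := leP 0 c.
    by apply: eq_isd (isd_min h h') => z; rewrite minr_pMr.
  by apply: eq_isd (isd_max h h') => z; rewrite minr_nMr // ltW.
- move=> f' _ h _ h'; have [c0|c0] := leP 0 c.
    by apply: eq_isd (isd_max h h') => z; rewrite maxr_pMr.
  by apply: eq_isd (isd_min h h') => z; rewrite maxr_nMr // ltW.
Qed.

Lemma isd_sum (T : Type) (r : seq T) (F : T -> D -> R) :
  (forall i, isd Coord (F i)) -> isd Coord (fun z => \sum_(i <- r) F i z).
Proof.
move=> iF; elim: r => [|i r ih].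
  by apply: eq_isd (isd_cst 0) => z; rewrite big_nil.
by apply: eq_isd (isdD (iF i) ih) => z; rewrite big_cons.
Qed.

Lemma isd_bigmin (T : Type) (r : seq T) (F : T -> D -> R) :
  (forall i, isd Coord (F i)) -> isd Coord (fun z => \big[Num.min/1]_(i <- r) F i z).
Proof.
move=> iF; elim: r => [|i r ih].
  by apply: eq_isd (isd_cst 1) => z; rewrite big_nil.
by apply: eq_isd (isd_min (iF i) ih) => z; rewrite big_cons.
Qed.

End IsdClosure.

Section IsdComp.
Variables (R : realType) (D D' : Type).
Variables (Coord : (D -> R) -> Prop) (Coord' : (D' -> R) -> Prop) (h : D' -> D).
Hypothesis coord_comp : forall f, Coord f -> polyfun Coord' (fun z => f (h z)).

Lemma polyfun_comp (f : D -> R) : polyfun Coord f -> polyfun Coord' (fun z => f (h z)).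
Proof.
elim => {}f.
- exact: pf_const.
- exact: coord_comp.
- by move=> g _ pf _ pg; exact: pf_add.
- by move=> g _ pf _ pg; exact: pf_mul.
Qed.

Lemma isd_comp (f : D -> R) : isd Coord f -> isd Coord' (fun z => f (h z)).
Proof.
elim => {}f.
- by move=> pf; exact/isd_poly/polyfun_comp.
- by move=> g _ pf _ pg; exact: isd_min.
- by move=> g _ pf _ pg; exact: isd_max.
Qed.

End IsdComp.

Section IsdSteps.
Variables (R : realType) (D : Type) (Coord : (D -> R) -> Prop).

Definition isd_steps (F : D -> R) : Prop :=
  exists (I : finType) (sgn : I -> bool) (g : I -> D -> R),
    (forall i, isd Coord (g i)) /\
    F = fun x => \sum_i (-1) ^+ sgn i * (0 < g i x)%R%:R.

Lemma isd_steps_pos (g : D -> R) : isd Coord g -> isd_steps (fun x => (0 < g x)%R%:R).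
Proof.
move=> ig; exists 'I_1, (fun=> false), (fun=> g); split => //.
by apply/funext => x; rewrite big_ord1 mul1r.
Qed.

Lemma isd_stepsN (F : D -> R) : isd_steps F -> isd_steps (fun x => - F x).
Proof.
move=> [I [sgn [g [ig ->]]]]; exists I, (fun i => ~~ sgn i), g; split => //.
by apply/funext => x; rewrite -sumrN; apply: eq_bigr => i _; rewrite signrN mulNr.
Qed.

Lemma isd_stepsD (F G : D -> R) : isd_steps F -> isd_steps G ->
  isd_steps (fun x => F x + G x).
Proof.
move=> [I [sF [f [if_ ->]]]] [J [sG [g [ig ->]]]].
exists (I + J)%type, (fun k => match k with inl i => sF i | inr j => sG j end),
  (fun k => match k with inl i => f i | inr j => g j end); split.
  by case.
by apply/funext => x; rewrite big_sumType.
Qed.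

Lemma isd_stepsM (F G : D -> R) : isd_steps F -> isd_steps G ->
  isd_steps (fun x => F x * G x).
Proof.
move=> [I [sF [f [if_ ->]]]] [J [sG [g [ig ->]]]].
exists (I * J)%type, (fun p => sF p.1 (+) sG p.2),
  (fun p x => Num.min (f p.1 x) (g p.2 x)); split.
  by move=> p; exact: isd_min.
apply/funext => x; rewrite mulr_suml.
under eq_bigr => i _ do rewrite mulr_sumr.
rewrite pair_bigA.
by apply: eq_bigr => -[i j] _; rewrite mulr_signM lt_min -natrM mulnb.
Qed.

Lemma isd_steps_indicT : isd_steps \1_[set: D].
Proof.
rewrite indicT; have := isd_steps_pos (isd_cst Coord (1 : R)).
by rewrite ltr01.
Qed.

Lemma isd_steps_indicC (A : set D) : isd_steps \1_A -> isd_steps \1_(~` A).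
Proof.
move=> iA; have -> : (\1_(~` A) : D -> R) = fun x => \1_[set: D] x - \1_A x.
  by apply/funext => x; rewrite indicC indicT indicE /=; case: (x \in A); rewrite ?subrr ?subr0.
exact: (isd_stepsD isd_steps_indicT (isd_stepsN iA)).
Qed.

Lemma isd_steps_indicI (A B : set D) : isd_steps \1_A -> isd_steps \1_B ->
  isd_steps \1_(A `&` B).
Proof. by rewrite indicI; exact: isd_stepsM. Qed.

Lemma isd_steps_indicU (A B : set D) : isd_steps \1_A -> isd_steps \1_B ->
  isd_steps \1_(A `|` B).
Proof.
move=> iA iB; rewrite -[A `|` B]setCK setCU.
by apply/isd_steps_indicC/isd_steps_indicI; exact: isd_steps_indicC.
Qed.

Lemma isd_steps_indic_gt0 (g : D -> R) : isd Coord g ->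
  isd_steps \1_[set x | 0 < g x].
Proof.
move=> ig; have -> : (\1_[set x | 0 < g x] : D -> R) = fun x => (0 < g x)%R%:R.
  apply/funext => x; rewrite indicE.
  have [gx|gx] := boolP (0 < g x); first by rewrite (mem_set (gx : [set x | 0 < g x] x)).
  by rewrite memNset //; exact/negP.
exact: (isd_steps_pos ig).
Qed.

Lemma isd_steps_indic_eq0 (f : D -> R) : polyfun Coord f ->
  isd_steps \1_[set x | f x = 0].
Proof.
move=> pf; have -> : [set x | f x = 0] = ~` [set x | 0 < `|f x|].
  apply/funext => x; apply/propext => /=.
  by split => [->|/negP]; [rewrite normr0 ltxx | rewrite normr_gt0 negbK => /eqP].
exact/isd_steps_indicC/isd_steps_indic_gt0/isd_norm.
Qed.

Lemma isd_steps_indic_Forall (T : Type) (A : T -> set D) (l : list T) :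
  List.Forall (fun a => isd_steps \1_(A a)) l ->
  isd_steps \1_[set x | List.Forall (fun a => A a x) l].
Proof.
elim=> [|a l' iA _ ih].
  have -> : [set x | List.Forall (fun a => A a x) [::]] = [set: D].
    by apply/funext => x; apply/propext; split => // _; constructor.
  exact: isd_steps_indicT.
have -> : [set x | List.Forall (fun a => A a x) (a :: l')] =
    A a `&` [set x | List.Forall (fun a => A a x) l'].
  by apply/funext => x; apply/propext; exact: List.Forall_cons_iff.
exact: isd_steps_indicI.
Qed.

Lemma isd_steps_indic_Exists (T : Type) (A : T -> set D) (l : list T) :
  List.Forall (fun a => isd_steps \1_(A a)) l ->
  isd_steps \1_[set x | List.Exists (fun a => A a x) l].
Proof.
elim=> [|a l' iA _ ih].
  have -> : [set x | List.Exists (fun a => A a x) [::]] = ~` [set: D].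
    by apply/funext => x; apply/propext; split => [/(proj1 (List.Exists_nil _))|/(_ I)] [].
  exact/isd_steps_indicC/isd_steps_indicT.
have -> : [set x | List.Exists (fun a => A a x) (a :: l')] =
    A a `|` [set x | List.Exists (fun a => A a x) l'].
  by apply/funext => x; apply/propext; exact: List.Exists_cons.
exact: isd_steps_indicU.
Qed.

End IsdSteps.

Lemma semialgebraic_isd_steps (R : realType) (m : nat) (S : set ('I_m -> R)) :
  semialgebraic S -> isd_steps (@coordRm R m) \1_S.
Proof.
move=> [blocks [pblocks memS]].
have -> : S = [set x | List.Exists (fun B => ([set x | List.Forall (fun P => P x = 0) B.1]
    `&` [set x | List.Forall (fun Q => 0 < Q x) B.2]) x) blocks].
  by apply/funext => x; apply/propext; exact: memS.
apply: isd_steps_indic_Exists; apply: List.Forall_impl pblocks => B [p1 p2].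
apply: isd_steps_indicI; apply: isd_steps_indic_Forall.
  by apply: List.Forall_impl p1 => P; exact: isd_steps_indic_eq0.
by apply: List.Forall_impl p2 => Q /isd_poly; exact: isd_steps_indic_gt0.
Qed.

Section ClampODE.
Variable R : realType.

Lemma clamp_id (c a : R) : `|a| <= c -> clamp c a = a.
Proof. by rewrite ler_norml => /andP[ca ac]; rewrite /clamp (max_idPl ca) (min_idPl ac). Qed.

Lemma clamp_sol_fixed (k : nat) (c : R) (M : 'M[R]_k) (b : 'cV[R]_k) :
  M *m b = b -> (forall i, `|b i ord0| <= c) ->
  clamp_sol c M b = if M \in unitmx then b else 0.
Proof.
move=> Mb bc; rewrite /clamp_sol; case: ifP => // unitM.
apply/matrixP => i j; rewrite [j]ord1 mxE -{1}Mb mulKmx //.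
exact: clamp_id.
Qed.

Lemma ode_sol_eq_at1 (m n : nat) (M : ('I_m -> R) -> ('I_n.+1 -> R) -> R -> 'M[R]_n.+1)
    (b : ('I_m -> R) -> ('I_n.+1 -> R) -> R -> 'cV[R]_n.+1)
    (c : R) (x : 'I_m -> R) (z1 z2 : R -> 'I_n.+1 -> R) :
  (forall y1 y2 s, M x y1 s = M x y2 s) -> (forall y1 y2 s, b x y1 s = b x y2 s) ->
  ode_sol M b c x z1 -> ode_sol M b c x z2 -> forall j, z1 1 j = z2 1 j.
Proof.
move=> M_indep b_indep [z10 [z1c z1d]] [z20 [z2c z2d]] j.
apply: (is_derive_eq_itv (df := fun s => clamp_sol c (M x (z2 s) s) (b x (z2 s) s) j ord0))
  ltr01 (z1c j) (z2c j) _ _ _; last by rewrite z10 z20.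
  by move=> s; rewrite in_itv => /z1d; rewrite (M_indep (z1 s) (z2 s)) (b_indep (z1 s) (z2 s)).
by move=> s; rewrite in_itv => /z2d.
Qed.

End ClampODE.

Section StepNetwork.
Variables (R : realType) (m K : nat).
Variables (sgn : 'I_K -> bool) (g : 'I_K -> ('I_m -> R) -> R).

Definition window_time (k : 'I_K) (s : R) : R := K%:R * s - k%:R.

Definition window_gate (k : 'I_K) (s : R) : R :=
  Num.max 0 (- (window_time k s * (1 - window_time k s))).

(* The outer [Num.max 0] keeps [switch] nonnegative, so it is nonzero iff positive. *)
Definition switch (x : 'I_m -> R) (s : R) : R :=
  \big[Num.min/1]_(k < K) Num.max 0 (Num.max (g k x) (window_gate k s)).

Definition drive (s : R) : R :=
  \sum_(k < K) (-1) ^+ sgn k * (K%:R * dsmoothstep (window_time k s)).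

Definition trajectory (x : 'I_m -> R) (s : R) : R :=
  \sum_(k < K) (-1) ^+ sgn k * ((0 < g k x)%R%:R * smoothstep (window_time k s)).

Lemma window_time_apart (j k : 'I_K) (s : R) : j != k -> 0 < window_time k s < 1 ->
  (window_time j s < 0) || (1 < window_time j s).
Proof.
move=> jk /andP[k0 k1].
have -> : window_time j s = window_time k s + (k%:R - j%:R) by rewrite /window_time; ring.
case: (ltngtP j k) => [jk'|kj|/val_inj jk']; last by rewrite jk' eqxx in jk.
  have : (j.+1)%:R <= k%:R :> R by rewrite ler_nat.
  by rewrite -addn1 natrD => ?; apply/orP; right; lra.
have : (k.+1)%:R <= j%:R :> R by rewrite ler_nat.
by rewrite -addn1 natrD => ?; apply/orP; left; lra.
Qed.

Lemma window_gate_eq0 k s : 0 <= window_time k s <= 1 -> window_gate k s = 0.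
Proof. by move=> /andP[? ?]; apply/max_idPl; nra. Qed.

Lemma window_gate_gt0 k s : (window_time k s < 0) || (1 < window_time k s) ->
  0 < window_gate k s.
Proof. by rewrite lt_max => /orP[] ?; apply/orP; right; nra. Qed.

Lemma switch_ge0 x s : 0 <= switch x s.
Proof. by apply/bigmin_geP; split=> // k _; rewrite le_max lexx. Qed.

Lemma switch_gt0 (k : 'I_K) x s : dsmoothstep (window_time k s) != 0 ->
  (0 < switch x s) = (0 < g k x).
Proof.
move=> /dsmoothstep_neq0 /andP[k0 k1].
apply/bigmin_gtP/idP => [[_ /(_ k isT)]|gk].
  by rewrite window_gate_eq0 ?ltW ?k0 ?k1 // !lt_max ltxx orbF.
split=> // j _; rewrite lt_max [X in _ || X]lt_max.
have [->|jk] := eqVneq j k; first by rewrite gk orbT.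
by rewrite window_gate_gt0 ?orbT // (window_time_apart (k := k)) // k0 k1.
Qed.

Lemma trajectory_derive x (s : R) :
  is_derive s 1 (trajectory x) (if switch x s != 0 then drive s else 0).
Proof.
have wt_derive k : is_derive s 1 (window_time k) K%:R.
  by apply: is_derive_eq; rewrite /GRing.scale /=; ring.
have -> : trajectory x = \sum_(k < K)
    (fun v => (-1) ^+ sgn k * (0 < g k x)%R%:R * smoothstep (window_time k v)).
  by apply/funext => v; rewrite fct_sumE; apply: eq_bigr => k _; rewrite mulrA.
apply: is_derive_eq.
  apply: is_derive_sum => k; apply: is_deriveZ.
  exact: is_derive1_comp (smoothstep_derive _) (wt_derive k).
have -> : (switch x s != 0) = (0 < switch x s) by rewrite lt_def switch_ge0 andbT.
have term k : ((-1) ^+ sgn k * (0 < g k x)%R%:R) *: (dsmoothstep (window_time k s) * K%:R)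
    = if 0 < switch x s then (-1) ^+ sgn k * (K%:R * dsmoothstep (window_time k s)) else 0.
  have [->|dk] := eqVneq (dsmoothstep (window_time k s)) 0.
    by rewrite mul0r scaler0 !mulr0 if_same.
  by rewrite /GRing.scale /= -(switch_gt0 x dk); case: (0 < switch x s) => /=; ring.
by rewrite (eq_bigr _ (fun k _ => term k)); case: ifP => _; last exact: big1.
Qed.

Lemma trajectory0 x : trajectory x 0 = 0.
Proof.
apply: big1 => k _; rewrite smoothstep_le0 ?mulr0 //.
by rewrite /window_time mulr0 sub0r oppr_le0.
Qed.

Lemma trajectory1 x : trajectory x 1 = \sum_(k < K) (-1) ^+ sgn k * (0 < g k x)%R%:R.
Proof.
apply: eq_bigr => k _; rewrite smoothstep_ge1 ?mulr1 //.
have : (k.+1)%:R <= K%:R :> R by rewrite ler_nat.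
by rewrite /window_time mulr1 -addn1 natrD => ?; lra.
Qed.

Lemma drive_bound s : `|drive s| <= (2 * K * K)%:R.
Proof.
apply: le_trans (ler_norm_sum _ _ _) _.
apply: (@le_trans _ _ (\sum_(k < K) K%:R * 2)).
  apply: ler_sum => k _; rewrite normrM normr_sign mul1r normrM normr_nat.
  by rewrite ger0_norm ?dsmoothstep_ge0 // ler_wpM2l ?ler0n ?dsmoothstep_le2.
by rewrite sumr_const card_ord -mulr_natr !natrM; lra.
Qed.

Definition step_net_M (x : 'I_m -> R) (y : 'I_2 -> R) (s : R) : 'M[R]_2 :=
  diag_mx (\row_i (if i == ord_max then 1 else switch x s)).

Definition step_net_b (x : 'I_m -> R) (y : 'I_2 -> R) (s : R) : 'cV[R]_2 :=
  \col_i (if i == ord_max then drive s else 0).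

Definition step_net_sol (x : 'I_m -> R) (s : R) (i : 'I_2) : R :=
  if i == ord_max then trajectory x s else 0.

Lemma step_net_field c x y s : (2 * K * K)%:R <= c ->
  clamp_sol c (step_net_M x y s) (step_net_b x y s) =
  if switch x s != 0 then step_net_b x y s else 0.
Proof.
move=> Kc; rewrite clamp_sol_fixed.
- by rewrite unitmxE det_diag big_ord_recl big_ord1 !mxE /= mulr1 unitfE.
- apply/matrixP => i j; rewrite mul_diag_mx !mxE.
  by case: (i == ord_max); rewrite ?mul1r ?mulr0.
- move=> i; rewrite mxE; case: (i == ord_max); last by rewrite normr0 (le_trans _ Kc).
  exact: le_trans (drive_bound s) Kc.
Qed.

Lemma isd_step_net : (forall k, isd (@coordRm R m) (g k)) -> isd_net step_net_M step_net_b.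
Proof.
move=> ig; pose CN := @coordNet R m 1.
have pf_wt k : polyfun CN (fun p => window_time k p.2).
  have pf_s : polyfun CN (fun p => p.2) by apply: pf_coord; right; right.
  exact: (pf_add (pf_mul (pf_const _ K%:R) pf_s) (pf_const _ (- k%:R))).
have pf_wt1 k : polyfun CN (fun p => 1 - window_time k p.2).
  exact: (pf_add (pf_const _ 1) (polyfunN (pf_wt k))).
have isd_switch : isd CN (fun p => switch p.1.1 p.2).
  apply: isd_bigmin => k; apply: isd_max (isd_cst _ 0) (isd_max _ _).
    apply: (isd_comp (Coord := @coordRm R m) (h := fun p : netdom R m 1 => p.1.1)) (ig k).
    by move=> f [i ->]; apply: pf_coord; left; exists i.
  exact: (isd_max (isd_cst _ 0) (isd_poly (polyfunN (pf_mul (pf_wt k) (pf_wt1 k))))).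
have isd_drive : isd CN (fun p => drive p.2).
  apply: isd_sum => k; apply: isdZ; apply: isdZ.
  exact: (isd_max (isd_cst _ 0) (isd_poly (pf_mul (pf_mul (pf_const _ 6) (pf_wt k)) (pf_wt1 k)))).
split => [i j|i].
  have [<-|ij] := eqVneq i j.
    have [->|iN] := eqVneq i ord_max.
      by apply: eq_isd (isd_cst _ 1) => p; rewrite !mxE eqxx.
    by apply: eq_isd isd_switch => p; rewrite !mxE eqxx (negbTE iN).
  by apply: eq_isd (isd_cst _ 0) => p; rewrite !mxE (negbTE ij).
have [->|iN] := eqVneq i ord_max.
  by apply: eq_isd isd_drive => p; rewrite !mxE eqxx.
by apply: eq_isd (isd_cst _ 0) => p; rewrite !mxE (negbTE iN).
Qed.

Lemma step_net_sol_ode c x : (2 * K * K)%:R <= c ->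
  ode_sol step_net_M step_net_b c x (step_net_sol x).
Proof.
move=> Kc; split; [|split].
- by move=> j; rewrite /step_net_sol trajectory0 if_same.
- move=> j; apply: derivable_within_continuous => s _; rewrite /step_net_sol.
  by case: (j == ord_max); [case: (trajectory_derive x s) | case: (is_derive_cst (0 : R) s 1)].
- move=> s _ j; rewrite step_net_field // /step_net_sol.
  case: (eqVneq j ord_max) => [->|jn].
    by apply: is_derive_eq (trajectory_derive x s) _; case: ifP; rewrite !mxE ?eqxx.
  apply: is_derive_eq (is_derive_cst (0 : R) s 1) _.
  by case: ifP => _; rewrite !mxE ?(negbTE jn).
Qed.

End StepNetwork.

Theorem mainTheorem13 (R : realType) (m : nat) (S : set ('I_m -> R)) :
  semialgebraic S ->
  exists (n : nat)
         (M : ('I_m -> R) -> ('I_n.+1 -> R) -> R -> 'M[R]_n.+1)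
         (b : ('I_m -> R) -> ('I_n.+1 -> R) -> R -> 'cV[R]_n.+1)
         (C : nat),
    isd_net M b /\
    forall (c : R), (C%:R <= c) -> forall x : 'I_m -> R,
      (exists z : R -> 'I_n.+1 -> R, ode_sol M b c x z) /\
      (forall z : R -> 'I_n.+1 -> R, ode_sol M b c x z ->
         (forall j : 'I_n.+1, j != ord_max -> z 1 j = 0) /\
         z 1 ord_max = \1_S x).
Proof.
move=> /semialgebraic_isd_steps [I [sgn [g [ig S_steps]]]].
pose sgnK := fun k : 'I_#|I| => sgn (enum_val k).
pose gK := fun k : 'I_#|I| => g (enum_val k).
exists 1%N, (step_net_M gK), (step_net_b sgnK), (2 * #|I| * #|I|)%N; split.
  by apply: isd_step_net => k; exact: ig.
move=> c Kc x; have sol := step_net_sol_ode sgnK gK x Kc.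
split=> [|z zsol]; first by exists (step_net_sol sgnK gK x).
have z1 : forall j, z 1 j = step_net_sol sgnK gK x 1 j by apply: ode_sol_eq_at1 zsol sol.
split=> [j jN|]; rewrite z1 /step_net_sol ?(negbTE jN) // eqxx trajectory1 S_steps.
by rewrite -(big_enum_val (A := I) (fun i => (-1) ^+ sgn i * (0 < g i x)%R%:R)).
Qed.
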